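(* Let $P=\langle X\mid R\rangle$ be a countably generated recursive presentation with $X=\{x_1,x_2,\dots\}$ enumerated, set $x_0$ to be the empty word, and let \[ Q=\langle X, a, b, t \mid R,\ \ t^{-1}x_{i}b^{-i}ab^{i}t=a^{-i}ba^{i}\ \text{ for all } i\ge 0\rangle . \] Then $\overline{Q}$ is torsion-free if and only if $\overline{P}$ is torsion-free.
   Context: A countably generated recursive presentation is $\langle X\mid R\rangle$ with $X$ a recursively enumerated set of generators and $R$ a recursively enumerable set of words. $\overline{P}$ denotes the group presented by $P$. *)

From Stdlib Require Import List Arith.
Import ListNotations.

(* A letter is a generator together with an exponent sign: (g, false) = g,
   (g, true) = g^{-1}. A word is a list of letters. *)
Definition word (G : Type) := list (G * bool).

Definition letter_inv {G : Type} (l : G * bool) : G * bool := (fst l, negb (snd l)).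

Definition word_inv {G : Type} (w : word G) : word G := rev (map letter_inv w).

Fixpoint word_pow {G : Type} (w : word G) (n : nat) : word G :=
  match n with
  | O => []
  | S k => w ++ word_pow w k
  end.

(* Two words are equal in the presented group iff pres_eq holds. *)
Inductive pres_eq {G : Type} (R : word G -> Prop) : word G -> word G -> Prop :=
  | pe_refl : forall w, pres_eq R w w
  | pe_sym : forall u v, pres_eq R u v -> pres_eq R v u
  | pe_trans : forall u v w, pres_eq R u v -> pres_eq R v w -> pres_eq R u w
  | pe_free : forall u v (g : G) (b : bool),
      pres_eq R (u ++ (g, b) :: (g, negb b) :: v) (u ++ v)
  | pe_rel : forall u v r, R r -> pres_eq R (u ++ r ++ v) (u ++ v).

Definition presented_torsion_free {G : Type} (R : word G -> Prop) : Prop :=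
  forall (w : word G) (n : nat), 1 <= n -> pres_eq R (word_pow w n) [] -> pres_eq R w [].

(* Generators of Q: the x_i (X k stands for x_{k+1}, k : nat), and a, b, t. *)
Inductive QGen : Type :=
  | QX : nat -> QGen
  | QA : QGen
  | QB : QGen
  | QT : QGen.

Definition qx (i : nat) : word QGen :=
  match i with
  | O => []
  | S k => [(QX k, false)]
  end.

Definition embedX (w : word nat) : word QGen := map (fun l => (QX (fst l), snd l)) w.

Definition gpow (g : QGen) (n : nat) : word QGen := word_pow [(g, false)] n.

Definition Q_rel_i (i : nat) : word QGen :=
  [(QT, true)] ++ qx i ++ word_inv (gpow QB i) ++ [(QA, false)] ++ gpow QB i ++ [(QT, false)]
  ++ word_inv (word_inv (gpow QA i) ++ [(QB, false)] ++ gpow QA i).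

Definition Q_rels (R : word nat -> Prop) (w : word QGen) : Prop :=
  (exists r, R r /\ w = embedX r) \/ (exists i, w = Q_rel_i i).

(* Q is obtained from P by three HNN extensions:
     P1 = <P, a | >                      (associated subgroups trivial),
     P2 = <P1, b | >                     (associated subgroups trivial),
     Q  = <P2, t | t^-1 h_i t = k_i>     with h_i = x_i b^-i a b^i, k_i = a^-i b a^i.
   The heart of the file is the general theorem that an HNN extension
   <G, t | t^-1 h_i t = k_i>, where h_i |-> k_i extends to an isomorphism of the
   subgroups they generate, is torsion-free iff G is (Higman–Neumann–Neumann).
   Its proof uses the normal-form action of the HNN extension on states
   "g t^e1 r1 ... t^en rn" (r_j chosen coset representatives); this action
   gives both the embedding of G and Britton's lemma, from which a cyclically
   reduced word containing t has no trivial power.  Words containing t are then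
   shown torsion-free by induction on the number of t-letters, reducing pinches
   and conjugating to cyclically reduced form.
   For the third extension the isomorphism condition holds because the k_i freely
   generate a free subgroup of <a, b> (rewriting through the kernel of a |-> 1,
   b |-> 0), while the endomorphism a <-> b, x_i |-> 1 maps each h_i to k_i.
   Finally the presentation of Q is a renaming of the iterated HNN presentation. *)

From Stdlib Require Import List Lia ZArith Morphisms.
From Stdlib Require Import ClassicalEpsilon FunctionalExtensionality PropExtensionality.
Import ListNotations.

Section Words.
Context {G : Type}.

Lemma word_inv_app (u v : word G) : word_inv (u ++ v) = word_inv v ++ word_inv u.
Proof. unfold word_inv. rewrite map_app, rev_app_distr. reflexivity. Qed.

Lemma word_inv_involutive (w : word G) : word_inv (word_inv w) = w.
Proof.
  unfold word_inv. rewrite map_rev, rev_involutive, map_map.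
  rewrite <- (map_id w) at 2. apply map_ext. intros [a b].
  unfold letter_inv; simpl. rewrite Bool.negb_involutive. reflexivity.
Qed.

Lemma word_inv_cons (l : G * bool) (w : word G) :
  word_inv (l :: w) = word_inv w ++ [letter_inv l].
Proof. reflexivity. Qed.

Variable R : word G -> Prop.

#[export] Instance pres_eq_equiv : Equivalence (pres_eq R).
Proof. split. intro; apply pe_refl. intros x y; apply pe_sym. intros x y z; apply pe_trans. Qed.

Lemma pres_eq_context (x y u v : word G) :
  pres_eq R u v -> pres_eq R (x ++ u ++ y) (x ++ v ++ y).
Proof.
  induction 1.
  - reflexivity.
  - symmetry; auto.
  - etransitivity; eauto.
  - replace (x ++ (u ++ (g, b) :: (g, negb b) :: v) ++ y)
      with ((x ++ u) ++ (g, b) :: (g, negb b) :: (v ++ y)) by (rewrite <- !app_assoc; reflexivity).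
    replace (x ++ (u ++ v) ++ y) with ((x ++ u) ++ (v ++ y)) by (rewrite !app_assoc; reflexivity).
    apply pe_free.
  - replace (x ++ (u ++ r ++ v) ++ y) with ((x ++ u) ++ r ++ (v ++ y))
      by (rewrite !app_assoc; reflexivity).
    replace (x ++ (u ++ v) ++ y) with ((x ++ u) ++ (v ++ y)) by (rewrite !app_assoc; reflexivity).
    apply pe_rel; auto.
Qed.

#[export] Instance app_proper : Proper (pres_eq R ==> pres_eq R ==> pres_eq R) (@app (G * bool)).
Proof.
  intros u u' Hu v v' Hv. transitivity (u' ++ v).
  - exact (pres_eq_context [] v u u' Hu).
  - pose proof (pres_eq_context u' [] v v' Hv) as E. rewrite !app_nil_r in E. exact E.
Qed.

#[export] Instance cons_proper (l : G * bool) : Proper (pres_eq R ==> pres_eq R) (cons l).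
Proof. intros u v E. exact (app_proper [l] [l] (pe_refl R [l]) u v E). Qed.

Lemma relator_trivial (r : word G) : R r -> pres_eq R r [].
Proof. intro Hr. pose proof (pe_rel R [] [] r Hr) as E. rewrite app_nil_r in E. exact E. Qed.

Lemma app_word_inv_r (w : word G) : pres_eq R (w ++ word_inv w) [].
Proof.
  induction w as [|[g b] w IH]; simpl.
  - reflexivity.
  - rewrite word_inv_cons. unfold letter_inv; simpl.
    rewrite (app_assoc w), IH. apply (pe_free R [] [] g b).
Qed.

Lemma app_word_inv_l (w : word G) : pres_eq R (word_inv w ++ w) [].
Proof. rewrite <- (word_inv_involutive w) at 2. apply app_word_inv_r. Qed.

Lemma pres_eq_iff_trivial (u v : word G) : pres_eq R u v <-> pres_eq R (u ++ word_inv v) [].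
Proof.
  split; intro E.
  - rewrite E. apply app_word_inv_r.
  - transitivity ((u ++ word_inv v) ++ v).
    + rewrite <- app_assoc, app_word_inv_l, app_nil_r. reflexivity.
    + rewrite E. reflexivity.
Qed.

#[export] Instance word_inv_proper : Proper (pres_eq R ==> pres_eq R) (@word_inv G).
Proof.
  intros u v E. transitivity (word_inv u ++ v ++ word_inv v).
  - rewrite app_word_inv_r, app_nil_r. reflexivity.
  - rewrite <- E at 1. rewrite app_assoc, app_word_inv_l. reflexivity.
Qed.

#[export] Instance word_pow_proper : Proper (pres_eq R ==> eq ==> pres_eq R) (@word_pow G).
Proof. intros u v E n m <-. induction n; simpl; [reflexivity | apply app_proper; assumption]. Qed.

Lemma word_pow_conj (c w : word G) n :
  pres_eq R (word_pow (word_inv c ++ w ++ c) n) (word_inv c ++ word_pow w n ++ c).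
Proof.
  induction n; simpl.
  - symmetry. apply app_word_inv_l.
  - rewrite IHn, <- !app_assoc, (app_assoc c (word_inv c)), app_word_inv_r. reflexivity.
Qed.

Definition torsion_free_elem (w : word G) : Prop :=
  forall n, 1 <= n -> pres_eq R (word_pow w n) [] -> pres_eq R w [].

Lemma torsion_free_elem_conj (c w w' : word G) :
  pres_eq R w' (word_inv c ++ w ++ c) -> torsion_free_elem w' -> torsion_free_elem w.
Proof.
  intros Ew Htf n Hn Hpow.
  assert (Hw' : pres_eq R w' []).
  { apply (Htf n Hn). rewrite Ew, word_pow_conj, Hpow. apply app_word_inv_l. }
  rewrite Ew in Hw'.
  transitivity (c ++ (word_inv c ++ w ++ c) ++ word_inv c).
  - rewrite !app_assoc, app_word_inv_r, <- app_assoc, app_word_inv_r, app_nil_r. reflexivity.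
  - rewrite Hw'. apply app_word_inv_r.
Qed.

Lemma torsion_free_elem_eq (w w' : word G) :
  pres_eq R w' w -> torsion_free_elem w' -> torsion_free_elem w.
Proof. intro E. apply (torsion_free_elem_conj []). rewrite app_nil_r. exact E. Qed.

End Words.

Section Substitution.
Context {G H : Type}.

Definition subst (f : G -> word H) (w : word G) : word H :=
  flat_map (fun l : G * bool => if snd l then word_inv (f (fst l)) else f (fst l)) w.

Lemma subst_app f (u v : word G) : subst f (u ++ v) = subst f u ++ subst f v.
Proof. apply flat_map_app. Qed.

Lemma subst_cons f (l : G * bool) w :
  subst f (l :: w) = (if snd l then word_inv (f (fst l)) else f (fst l)) ++ subst f w.
Proof. reflexivity. Qed.

Lemma subst_inv f (w : word G) : subst f (word_inv w) = word_inv (subst f w).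
Proof.
  induction w as [|[g b] w IH]; [reflexivity|].
  rewrite word_inv_cons, subst_app, IH, (subst_cons f (g, b) w), word_inv_app. f_equal.
  unfold subst; simpl. rewrite app_nil_r.
  destruct b; simpl; rewrite ?word_inv_involutive; reflexivity.
Qed.

Lemma subst_pow f (w : word G) n : subst f (word_pow w n) = word_pow (subst f w) n.
Proof. induction n; simpl; [reflexivity | rewrite subst_app, IHn; reflexivity]. Qed.

Lemma subst_ext f f' (w : word G) : (forall x, f x = f' x) -> subst f w = subst f' w.
Proof. intro E. apply flat_map_ext. intros [a b]; simpl. rewrite E; reflexivity. Qed.

Lemma subst_ext_pres_eq (R : word H -> Prop) f f' (w : word G) :
  (forall x, pres_eq R (f x) (f' x)) -> pres_eq R (subst f w) (subst f' w).
Proof.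
  intro E. induction w as [|[a b] w IH]; [reflexivity|].
  rewrite !subst_cons, IH. simpl. destruct b; rewrite (E a); reflexivity.
Qed.

Lemma subst_hom (R1 : word G -> Prop) (R2 : word H -> Prop) f :
  (forall r, R1 r -> pres_eq R2 (subst f r) []) ->
  forall u v, pres_eq R1 u v -> pres_eq R2 (subst f u) (subst f v).
Proof.
  intros Hrel u v E. induction E.
  - reflexivity.
  - symmetry; auto.
  - etransitivity; eauto.
  - rewrite !subst_app, !subst_cons. simpl. destruct b; simpl.
    + rewrite (app_assoc (word_inv (f g))), app_word_inv_l. reflexivity.
    + rewrite (app_assoc (f g)), app_word_inv_r. reflexivity.
  - rewrite !subst_app, (Hrel r H0). reflexivity.
Qed.

Definition rename (f : G -> H) (w : word G) : word H := map (fun l => (f (fst l), snd l)) w.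

Lemma rename_subst f (w : word G) : rename f w = subst (fun x => [(f x, false)]) w.
Proof. induction w as [|[a b] w IH]; [reflexivity|]. simpl. rewrite IH. destruct b; reflexivity. Qed.

Lemma rename_app f (u v : word G) : rename f (u ++ v) = rename f u ++ rename f v.
Proof. apply map_app. Qed.

Lemma rename_inv f (w : word G) : rename f (word_inv w) = word_inv (rename f w).
Proof. rewrite !rename_subst. apply subst_inv. Qed.

Lemma rename_pow f (w : word G) n : rename f (word_pow w n) = word_pow (rename f w) n.
Proof. rewrite !rename_subst. apply subst_pow. Qed.

End Substitution.

Lemma subst_subst {A B C : Type} (f : B -> word C) (g : A -> word B) w :
  subst f (subst g w) = subst (fun x => subst f (g x)) w.
Proof.
  induction w as [|[a b] w IH]; [reflexivity|].
  rewrite !subst_cons, subst_app, IH. simpl. destruct b; rewrite ?subst_inv; reflexivity.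
Qed.

Lemma subst_unit {A : Type} (w : word A) : subst (fun x => [(x, false)]) w = w.
Proof. induction w as [|[a b] w IH]; [reflexivity|]. rewrite subst_cons, IH. destruct b; reflexivity. Qed.

Lemma rename_id {A : Type} (f : A -> A) (w : word A) : (forall x, f x = x) -> rename f w = w.
Proof. intro E. induction w as [|[a b] w IH]; [reflexivity|]. simpl. rewrite E, IH. reflexivity. Qed.

Lemma rename_rename {A B C : Type} (f : B -> C) (g : A -> B) w :
  rename f (rename g w) = rename (fun x => f (g x)) w.
Proof. unfold rename. rewrite map_map. reflexivity. Qed.

Lemma conj_subst {A B : Type} (R : word B -> Prop) (T : word B) (f : A -> word B) s :
  pres_eq R (T ++ subst f s ++ word_inv T) (subst (fun i => T ++ f i ++ word_inv T) s).
Proof.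
  induction s as [|[a b] s IH].
  - apply app_word_inv_r.
  - rewrite !subst_cons, <- IH. cbn [fst snd].
    transitivity (T ++ (if b then word_inv (f a) else f a) ++ (word_inv T ++ T) ++ subst f s ++ word_inv T).
    + rewrite app_word_inv_l. simpl. rewrite <- !app_assoc. reflexivity.
    + destruct b; rewrite ?word_inv_app, ?word_inv_involutive, <- !app_assoc; reflexivity.
Qed.

(* Torsion-freeness passes to a group <A|R1> that is a retract of <B|R2>:
   f is injective on <A|R1> since g is a left inverse of it. *)
Lemma torsion_free_retract {A B : Type} (R1 : word A -> Prop) (R2 : word B -> Prop)
    (f : A -> word B) (g : B -> word A) :
  (forall r, R1 r -> pres_eq R2 (subst f r) []) ->
  (forall r, R2 r -> pres_eq R1 (subst g r) []) ->
  (forall x, pres_eq R1 (subst g (f x)) [(x, false)]) ->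
  presented_torsion_free R2 -> presented_torsion_free R1.
Proof.
  intros Hf Hg Hgf Htf w n Hn Hpow.
  assert (Efw : pres_eq R2 (subst f w) []).
  { apply (Htf _ n Hn). rewrite <- subst_pow. exact (subst_hom R1 R2 f Hf _ _ Hpow). }
  apply (subst_hom R2 R1 g Hg) in Efw. rewrite subst_subst in Efw.
  rewrite (subst_ext_pres_eq R1 _ (fun x => [(x, false)])), subst_unit in Efw by exact Hgf.
  exact Efw.
Qed.

Lemma torsion_free_rename_iff {A B : Type} (R1 : word A -> Prop) (R2 : word B -> Prop)
    (f : A -> B) (g : B -> A) :
  (forall x, g (f x) = x) -> (forall y, f (g y) = y) ->
  (forall r, R1 r -> R2 (rename f r)) -> (forall r, R2 r -> R1 (rename g r)) ->
  presented_torsion_free R1 <-> presented_torsion_free R2.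
Proof.
  intros gf fg Hf Hg.
  assert (Hf' : forall r, R1 r -> pres_eq R2 (subst (fun x => [(f x, false)]) r) [])
    by (intros r Hr; rewrite <- rename_subst; apply relator_trivial, Hf, Hr).
  assert (Hg' : forall r, R2 r -> pres_eq R1 (subst (fun y => [(g y, false)]) r) [])
    by (intros r Hr; rewrite <- rename_subst; apply relator_trivial, Hg, Hr).
  split; [apply (torsion_free_retract R2 R1 _ _ Hg' Hf') | apply (torsion_free_retract R1 R2 _ _ Hf' Hg')];
    intro; simpl; rewrite ?fg, ?gf; reflexivity.
Qed.
(* Letters of sign e (e = true
   meaning t^-1) move the subgroup generated by [gens e] to the one generated by
   [gens (negb e)]; the hypothesis says that h_i |-> k_i is an isomorphism. *)
Section HNN.
Variables (G : Type) (R : word G -> Prop) (I : Type) (h k : I -> word G).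
Hypothesis assoc_iso : forall s : word I, pres_eq R (subst h s) [] <-> pres_eq R (subst k s) [].

Local Notation "u == v" := (pres_eq R u v) (at level 70).

Definition gens (e : bool) : I -> word G := if e then h else k.

Lemma assoc_iso_gen e s s' :
  subst (gens e) s == subst (gens e) s' <-> subst (gens (negb e)) s == subst (gens (negb e)) s'.
Proof.
  rewrite !(pres_eq_iff_trivial R (subst _ s)), <- !subst_inv, <- !subst_app.
  destruct e; simpl; [apply assoc_iso | symmetry; apply assoc_iso].
Qed.

Definition in_sub (e : bool) (w : word G) : Prop := exists s, w == subst (gens e) s.

Lemma in_sub_resp e u v : u == v -> in_sub e u -> in_sub e v.
Proof. intros E [s Hs]. exists s. rewrite <- E. exact Hs. Qed.

Lemma in_sub_nil e : in_sub e [].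
Proof. exists []. reflexivity. Qed.

Lemma in_sub_app e u v : in_sub e u -> in_sub e v -> in_sub e (u ++ v).
Proof. intros [s1 H1] [s2 H2]. exists (s1 ++ s2). rewrite subst_app, H1, H2. reflexivity. Qed.

Lemma in_sub_inv e u : in_sub e u -> in_sub e (word_inv u).
Proof. intros [s Hs]. exists (word_inv s). rewrite subst_inv, Hs. reflexivity. Qed.

Lemma in_sub_gen e i : in_sub e (gens e i).
Proof. exists [(i, false)]. simpl. rewrite app_nil_r. reflexivity. Qed.

Lemma in_sub_cancel_r e u v : in_sub e v -> in_sub e (u ++ v) -> in_sub e u.
Proof.
  intros Hv Huv. apply (in_sub_resp e ((u ++ v) ++ word_inv v)).
  - rewrite <- app_assoc, app_word_inv_r, app_nil_r. reflexivity.
  - apply in_sub_app; auto using in_sub_inv.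
Qed.

Definition coset_eq (e : bool) (u v : word G) : Prop := in_sub e (u ++ word_inv v).

Lemma coset_eq_refl e u : coset_eq e u u.
Proof. apply (in_sub_resp e []); [symmetry; apply app_word_inv_r | apply in_sub_nil]. Qed.

Lemma coset_eq_sym e u v : coset_eq e u v -> coset_eq e v u.
Proof. unfold coset_eq. intro H. apply in_sub_inv in H. rewrite word_inv_app, word_inv_involutive in H. exact H. Qed.

Lemma coset_eq_trans e u v w : coset_eq e u v -> coset_eq e v w -> coset_eq e u w.
Proof.
  unfold coset_eq. intros H1 H2. apply (in_sub_resp e ((u ++ word_inv v) ++ (v ++ word_inv w))).
  - rewrite <- !app_assoc, (app_assoc (word_inv v)), app_word_inv_l. reflexivity.
  - apply in_sub_app; auto.
Qed.

Lemma coset_eq_in_sub e u v : coset_eq e u v -> in_sub e u -> in_sub e v.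
Proof.
  intros C Hu. apply coset_eq_sym in C.
  apply (in_sub_cancel_r e v (word_inv u)); auto using in_sub_inv.
Qed.

Definition coset_rep (e : bool) (g : word G) : word G :=
  epsilon (inhabits []) (fun x => coset_eq e x g /\ (in_sub e g -> x = [])).

Lemma coset_rep_spec e g : coset_eq e (coset_rep e g) g /\ (in_sub e g -> coset_rep e g = []).
Proof.
  unfold coset_rep. apply epsilon_spec. destruct (classic (in_sub e g)) as [Hg|Hg].
  - exists []. split; auto. apply in_sub_inv; auto.
  - exists g. split; [apply coset_eq_refl | contradiction].
Qed.

Lemma coset_rep_nil_iff e g : coset_rep e g = [] <-> in_sub e g.
Proof.
  split.
  - intro E. destruct (coset_rep_spec e g) as [C _]. rewrite E in C.
    apply (coset_eq_in_sub e []); auto using in_sub_nil.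
  - apply coset_rep_spec.
Qed.

Lemma coset_rep_coset_eq e g g' : coset_eq e g g' -> coset_rep e g = coset_rep e g'.
Proof.
  intro C. unfold coset_rep. f_equal. apply functional_extensionality. intro x.
  apply propositional_extensionality. split; intros [H1 H2]; split.
  - eapply coset_eq_trans; eauto.
  - intro Hs. apply H2. apply (coset_eq_in_sub e g'); auto using coset_eq_sym.
  - eapply coset_eq_trans; eauto using coset_eq_sym.
  - intro Hs. apply H2. apply (coset_eq_in_sub e g); auto.
Qed.

Lemma coset_rep_resp e g g' : g == g' -> coset_rep e g = coset_rep e g'.
Proof.
  intro E. apply coset_rep_coset_eq. apply (in_sub_resp e []); [|apply in_sub_nil].
  rewrite E. symmetry. apply app_word_inv_r.
Qed.

Lemma coset_rep_mul_sub e x g : in_sub e x -> coset_rep e (x ++ g) = coset_rep e g.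
Proof.
  intro Hx. apply coset_rep_coset_eq. unfold coset_eq. rewrite <- app_assoc.
  apply (in_sub_resp e x); auto. rewrite app_word_inv_r, app_nil_r. reflexivity.
Qed.

Lemma coset_rep_idem e g : coset_rep e (coset_rep e g) = coset_rep e g.
Proof. apply coset_rep_coset_eq, coset_rep_spec. Qed.

Lemma coset_rep_quotient e g : in_sub e (g ++ word_inv (coset_rep e g)).
Proof. apply coset_eq_sym, coset_rep_spec. Qed.

(* The associated isomorphism from side e to side (negb e), extended arbitrarily
   outside the subgroup. *)
Definition transfer (e : bool) (w : word G) : word G :=
  subst (gens (negb e)) (epsilon (inhabits []) (fun s => w == subst (gens e) s)).

Lemma transfer_spec e w s : w == subst (gens e) s -> transfer e w == subst (gens (negb e)) s.
Proof.
  intro Hs. unfold transfer. apply (assoc_iso_gen e).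
  pose proof (epsilon_spec (inhabits []) (fun s => w == subst (gens e) s) (ex_intro _ s Hs)) as E.
  simpl in E. transitivity w; [symmetry; exact E | exact Hs].
Qed.

Lemma transfer_resp e u v : u == v -> transfer e u = transfer e v.
Proof.
  intro E. unfold transfer. do 2 f_equal. apply functional_extensionality. intro x.
  apply propositional_extensionality. rewrite E. reflexivity.
Qed.

#[local] Instance transfer_proper e : Proper (pres_eq R ==> pres_eq R) (transfer e).
Proof. intros u v E. rewrite (transfer_resp e u v E). reflexivity. Qed.

Lemma transfer_in_sub e w : in_sub (negb e) (transfer e w).
Proof. unfold transfer. eexists; reflexivity. Qed.

Lemma transfer_app e u v : in_sub e u -> in_sub e v -> transfer e (u ++ v) == transfer e u ++ transfer e v.
Proof.
  intros [s1 H1] [s2 H2]. rewrite (transfer_spec e u s1 H1), (transfer_spec e v s2 H2), <- subst_app.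
  apply transfer_spec. rewrite subst_app, H1, H2. reflexivity.
Qed.

Lemma transfer_involutive e w : in_sub (negb e) w -> transfer e (transfer (negb e) w) == w.
Proof.
  intros [s Hs]. rewrite (transfer_spec e (transfer (negb e) w) s).
  - symmetry. exact Hs.
  - rewrite <- (Bool.negb_involutive e) at 2. apply transfer_spec. exact Hs.
Qed.

Lemma transfer_gen i : transfer true (h i) == k i.
Proof.
  rewrite (transfer_spec true (h i) [(i, false)]); simpl; rewrite app_nil_r; reflexivity.
Qed.

(* The presentation of the HNN extension: generators Some g (g : G) and t = None. *)
Definition base (w : word G) : word (option G) := rename Some w.

Definition hnn_rels (w : word (option G)) : Prop :=
  (exists r, R r /\ w = base r) \/
  (exists i, w = [(None, true)] ++ base (h i) ++ [(None, false)] ++ word_inv (base (k i))).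

Lemma base_hom u v : u == v -> pres_eq hnn_rels (base u) (base v).
Proof.
  intro E. unfold base. rewrite !rename_subst. apply (subst_hom R hnn_rels); auto.
  intros r Hr. rewrite <- rename_subst. apply relator_trivial. left. exists r; auto.
Qed.

Lemma base_app u v : base (u ++ v) = base u ++ base v.
Proof. apply rename_app. Qed.

Lemma base_inv u : base (word_inv u) = word_inv (base u).
Proof. apply rename_inv. Qed.

(* A state (g, [(e1, r1); ...; (en, rn)]) stands for the
   element g t^e1 r1 ... t^en rn; it is normal when every r_j is a chosen coset
   representative for side e_j and no t^e [] t^-e occurs. *)
Definition state : Type := (word G * list (bool * word G))%type.

Fixpoint no_cancellation (l : list (bool * word G)) : Prop :=
  match l with
  | (e, g) :: (((e', _) :: _) as l') => ~ (g = [] /\ e' = negb e) /\ no_cancellation l'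
  | _ => True
  end.

Definition normal (x : state) : Prop :=
  Forall (fun p => coset_rep (fst p) (snd p) = snd p) (snd x) /\ no_cancellation (snd x).

Definition state_eq (x y : state) : Prop := fst x == fst y /\ snd x = snd y.

Lemma state_eq_refl x : state_eq x x.
Proof. split; reflexivity. Qed.

Lemma state_eq_sym x y : state_eq x y -> state_eq y x.
Proof. intros [H1 H2]; split; symmetry; auto. Qed.

Lemma state_eq_trans x y z : state_eq x y -> state_eq y z -> state_eq x z.
Proof. intros [H1 H2] [H3 H4]; split; etransitivity; eauto. Qed.

(* Left multiplication by t^e: write g = q r with q in the subgroup of side e and
   r its coset representative, move q across t^e (as transfer e q), and either
   cancel t^e against a leading t^-e (when r = []) or record (e, r). *)
Definition act_t (e : bool) (x : state) : state :=
  let r := coset_rep e (fst x) in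
  let y := transfer e (fst x ++ word_inv r) in
  match snd x with
  | (e', g1) :: l' =>
      if excluded_middle_informative (r = [] /\ e' = negb e) then (y ++ g1, l')
      else (y, (e, r) :: snd x)
  | [] => (y, [(e, r)])
  end.

Definition act_letter (l : option G * bool) (x : state) : state :=
  match l with
  | (Some a, b) => ((a, b) :: fst x, snd x)
  | (None, e) => act_t e x
  end.

Definition act (w : word (option G)) (x : state) : state := fold_right act_letter x w.

Lemma act_app u v x : act (u ++ v) x = act u (act v x).
Proof. apply fold_right_app. Qed.

Lemma act_base g x : act (base g) x = (g ++ fst x, snd x).
Proof.
  induction g as [|[a b] g IH]; [destruct x; reflexivity|].
  change (act (base ((a, b) :: g)) x) with (act_letter (Some a, b) (act (base g) x)).
  rewrite IH. reflexivity.
Qed.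

Lemma act_resp w x y : state_eq x y -> state_eq (act w x) (act w y).
Proof.
  induction w as [|[[a|] b] w IH]; simpl; auto.
  - intro E. destruct (IH E) as [E1 E2]. split; simpl; [rewrite E1; reflexivity | exact E2].
  - intro E. destruct (act w x) as [g l1], (act w y) as [g' l2], (IH E) as [E1 E2].
    simpl in *. subst l2. unfold act_t; simpl.
    rewrite (coset_rep_resp b g g' E1), (transfer_resp b _ (g' ++ word_inv (coset_rep b g')))
      by (rewrite E1; reflexivity).
    apply state_eq_refl.
Qed.

Lemma act_t_normal e x : normal x -> normal (act_t e x).
Proof.
  destruct x as [g0 l]. intros [F N]. unfold act_t; simpl in *.
  destruct l as [|[e' g1] l'].
  - split; simpl; auto. constructor; auto. apply coset_rep_idem.
  - destruct excluded_middle_informative as [D|D].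
    + split; simpl. inversion F; auto. destruct l' as [|[]]; simpl in *; tauto.
    + split; simpl; [constructor; auto; apply coset_rep_idem | split; auto].
Qed.

Lemma act_normal w x : normal x -> normal (act w x).
Proof.
  (* letters of G do not change the list part, on which normality depends *)
  induction w as [|[[a|] b] w IH]; simpl; intro Hx; auto.
  apply act_t_normal; auto.
Qed.

Lemma act_t_cancel e y r l :
  in_sub e y -> state_eq (act_t e (y, (negb e, r) :: l)) (transfer e y ++ r, l).
Proof.
  intro Hy. unfold act_t; simpl. rewrite (proj2 (coset_rep_nil_iff e y) Hy).
  destruct excluded_middle_informative as [_|D]; [|exfalso; auto].
  split; simpl; auto. rewrite app_nil_r. reflexivity.
Qed.

Lemma act_t_record e y r l :
  in_sub e y -> coset_rep e r = r -> no_cancellation ((e, r) :: l) ->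
  state_eq (act_t e (y ++ r, l)) (transfer e y, (e, r) :: l).
Proof.
  intros Hy Hr N. unfold act_t; simpl. rewrite (coset_rep_mul_sub e y r Hy), Hr.
  assert (Ey : transfer e ((y ++ r) ++ word_inv r) == transfer e y)
    by (rewrite <- app_assoc, app_word_inv_r, app_nil_r; reflexivity).
  destruct l as [|[e2 g2] l'].
  - split; auto.
  - destruct excluded_middle_informative as [D|D]; [exfalso; apply (proj1 N), D|].
    split; auto.
Qed.

(* The defining relation t^-1 h_i t = k_i, in the form used by the action. *)
Lemma transfer_conj_gen i q :
  in_sub false q -> transfer true (h i ++ transfer false q) == k i ++ q.
Proof.
  intro Hq. rewrite transfer_app by (apply (in_sub_gen true) || apply (transfer_in_sub false)).
  rewrite transfer_gen, transfer_involutive by exact Hq. reflexivity.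
Qed.

Lemma act_tt e x : normal x -> state_eq (act_t e (act_t (negb e) x)) x.
Proof.
  destruct x as [g0 l]. intros [F N].
  unfold act_t at 2. cbn [fst snd].
  set (r := coset_rep (negb e) g0). set (q := g0 ++ word_inv r).
  assert (Hq : in_sub (negb e) q) by apply coset_rep_quotient.
  assert (Hy : in_sub e (transfer (negb e) q)).
  { pose proof (transfer_in_sub (negb e) q) as Hy. rewrite Bool.negb_involutive in Hy. exact Hy. }
  assert (Cancel : state_eq (act_t e (transfer (negb e) q, (negb e, r) :: l)) (g0, l)).
  { eapply state_eq_trans; [apply act_t_cancel, Hy|]. split; simpl; [|reflexivity].
    rewrite transfer_involutive by exact Hq.
    unfold q. rewrite <- app_assoc, app_word_inv_l, app_nil_r. reflexivity. }
  destruct l as [|[e1 g1] l']; [exact Cancel|].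
  destruct excluded_middle_informative as [[Dr De]|D]; [|exact Cancel].
  (* t^-e cancelled a leading t^e: t^e now restores it *)
  rewrite Bool.negb_involutive in De. subst e1.
  inversion F as [|? ? F1 _]; subst.
  eapply state_eq_trans; [apply act_t_record; auto|]. split; simpl; [|reflexivity].
  rewrite transfer_involutive by exact Hq. unfold q. rewrite Dr, app_nil_r. reflexivity.
Qed.

Lemma act_hnn_relator i x : normal x ->
  state_eq (act ([(None, true)] ++ base (h i) ++ [(None, false)] ++ word_inv (base (k i))) x) x.
Proof.
  destruct x as [g0 l]. intros [F N].
  rewrite <- base_inv, !act_app, (act_base (word_inv (k i)) (g0, l)). cbn [fst snd].
  set (g1 := word_inv (k i) ++ g0).
  change (act [(None, false)] (g1, l)) with (act_t false (g1, l)).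
  change (act [(None, true)] ?y) with (act_t true y).
  unfold act_t at 2. cbn [fst snd].
  set (r := coset_rep false g1). set (q := g1 ++ word_inv r). set (c := transfer false q).
  assert (Hq : in_sub false q) by apply coset_rep_quotient.
  assert (Hc : in_sub true (h i ++ c))
    by (apply in_sub_app; [apply (in_sub_gen true) | apply (transfer_in_sub false)]).
  assert (Ec : transfer true (h i ++ c) ++ r == g0).
  { unfold c. rewrite transfer_conj_gen by exact Hq. unfold q, g1.
    rewrite <- !app_assoc, app_word_inv_l, app_nil_r, app_assoc, app_word_inv_r. reflexivity. }
  assert (Cancel : forall L, state_eq (act_t true (act (base (h i)) (c, (false, r) :: L))) (g0, L)).
  { intro L. rewrite act_base. eapply state_eq_trans; [apply (act_t_cancel true), Hc|].
    split; [exact Ec | reflexivity]. }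
  destruct l as [|[e1 g2] l']; [apply Cancel|].
  destruct excluded_middle_informative as [[Dr De]|D]; [|apply Cancel].
  simpl in De. subst e1. inversion F as [|? ? F1 _]; subst.
  rewrite act_base. cbn [fst snd]. rewrite app_assoc.
  eapply state_eq_trans; [apply act_t_record; auto|]. split; simpl; [|reflexivity].
  rewrite Dr, app_nil_r in Ec. exact Ec.
Qed.

Lemma act_relator x r : normal x -> hnn_rels r -> state_eq (act r x) x.
Proof.
  intros Hx [[r' [Hr ->]] | [i ->]].
  - destruct x as [g0 l]. rewrite act_base. split; simpl; auto.
    exact (pe_rel R [] g0 r' Hr).
  - apply act_hnn_relator; auto.
Qed.

Lemma act_pres_eq u v : pres_eq hnn_rels u v -> forall x, normal x -> state_eq (act u x) (act v x).
Proof.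
  induction 1; intros x Hx.
  - apply state_eq_refl.
  - apply state_eq_sym; auto.
  - eapply state_eq_trans; eauto.
  - rewrite !act_app. apply act_resp.
    change (act ((g, b) :: (g, negb b) :: v) x) with (act_letter (g, b) (act_letter (g, negb b) (act v x))).
    assert (Hv := act_normal v x Hx). destruct (act v x) as [g0 l].
    destruct g as [a|]; simpl.
    + split; simpl; auto. apply (pe_free R [] g0 a b).
    + apply act_tt; auto.
  - rewrite !act_app. apply act_resp, act_relator; auto using act_normal.
Qed.

Lemma normal_empty : normal ([], []).
Proof. split; simpl; auto. Qed.

Theorem base_injective w : pres_eq hnn_rels (base w) [] -> w == [].
Proof.
  intro E. destruct (act_pres_eq _ _ E ([], []) normal_empty) as [Ew _].
  rewrite act_base, app_nil_r in Ew. exact Ew.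
Qed.

Theorem hnn_torsion_free_base : presented_torsion_free hnn_rels -> presented_torsion_free R.
Proof.
  intros Htf w n Hn Hpow. apply base_injective, (Htf _ n Hn).
  unfold base. rewrite <- rename_pow. exact (base_hom _ _ Hpow).
Qed.

Definition t_word (l : list (bool * word G)) : word (option G) :=
  flat_map (fun p => (None, fst p) :: base (snd p)) l.

Lemma t_word_app l1 l2 : t_word (l1 ++ l2) = t_word l1 ++ t_word l2.
Proof. apply flat_map_app. Qed.

Lemma decompose w : exists g0 l, w = base g0 ++ t_word l.
Proof.
  induction w as [|[[a|] b] w [g0 [l ->]]].
  - exists [], []. reflexivity.
  - exists ((a, b) :: g0), l. reflexivity.
  - exists [], ((b, g0) :: l). reflexivity.
Qed.

Fixpoint t_count (w : word (option G)) : nat :=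
  match w with
  | [] => 0
  | (None, _) :: w' => S (t_count w')
  | (Some _, _) :: w' => t_count w'
  end.

Lemma t_count_app u v : t_count (u ++ v) = t_count u + t_count v.
Proof. induction u as [|[[a|] b] u IH]; simpl; auto. Qed.

Lemma t_count_base g : t_count (base g) = 0.
Proof. induction g as [|[a b] g IH]; simpl; auto. Qed.

Lemma t_count_t_word l : t_count (t_word l) = length l.
Proof. induction l as [|[e g] l IH]; simpl; auto. rewrite t_count_app, t_count_base, IH. reflexivity. Qed.

Definition pinch (a b : bool * word G) : Prop := fst b = negb (fst a) /\ in_sub (fst a) (snd a).

Fixpoint reduced (l : list (bool * word G)) : Prop :=
  match l with
  | a :: ((b :: _) as l') => ~ pinch a b /\ reduced l'
  | _ => True
  end.

(* Britton's lemma, via the action: a reduced t-word acts on the trivial state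
   producing a state whose list starts with the first letter's sign. *)
Lemma britton_state l : forall e g, reduced ((e, g) :: l) ->
  exists y r l', act (t_word ((e, g) :: l)) ([], []) = (y, (e, r) :: l') /\ in_sub (negb e) y.
Proof.
  induction l as [|[e2 g2] l IH]; intros e g Hred.
  - simpl. rewrite app_nil_r, act_base. do 3 eexists. split; [reflexivity | apply transfer_in_sub].
  - destruct Hred as [Hp Hred]. destruct (IH e2 g2 Hred) as [y [r [l' [E Hy]]]].
    change (t_word ((e, g) :: (e2, g2) :: l)) with ((None, e) :: base g ++ t_word ((e2, g2) :: l)).
    change (act ((None, e) :: base g ++ t_word ((e2, g2) :: l)) ([], []))
      with (act_t e (act (base g ++ t_word ((e2, g2) :: l)) ([], []))).
    rewrite act_app, E, act_base. unfold act_t. simpl.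
    destruct excluded_middle_informative as [[Dr De]|D].
    + exfalso. apply Hp. split; simpl; auto. subst e2.
      apply coset_rep_nil_iff in Dr. rewrite Bool.negb_involutive in Hy.
      apply (in_sub_cancel_r e g y); auto.
    + do 3 eexists. split; [reflexivity | apply transfer_in_sub].
Qed.

Corollary britton l : l <> [] -> reduced l -> ~ pres_eq hnn_rels (t_word l) [].
Proof.
  intros Hl Hred E. destruct l as [|[e g] l]; [contradiction|].
  destruct (britton_state l e g Hred) as [y [r [l' [Ea _]]]].
  destruct (act_pres_eq _ _ E ([], []) normal_empty) as [_ Es].
  rewrite Ea in Es. discriminate.
Qed.

Lemma base_subst (f : I -> word G) s : base (subst f s) = subst (fun i => base (f i)) s.
Proof.
  unfold base. rewrite rename_subst, subst_subst. apply subst_ext. intro. rewrite rename_subst. reflexivity.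
Qed.

Lemma hnn_relation e i :
  pres_eq hnn_rels ([(None, e)] ++ base (gens e i) ++ [(None, negb e)]) (base (gens (negb e) i)).
Proof.
  assert (Rel : pres_eq hnn_rels ([(None, true)] ++ base (h i) ++ [(None, false)]) (base (k i))).
  { apply pres_eq_iff_trivial. rewrite <- !app_assoc. apply relator_trivial. right. exists i. reflexivity. }
  destruct e; simpl; [exact Rel|].
  rewrite <- Rel.
  transitivity ([(None, false); (None, true)] ++ base (h i) ++ [(None, false); (None, true)]).
  - simpl. rewrite <- !app_assoc. reflexivity.
  - rewrite (pe_free hnn_rels [] [] None false). simpl. rewrite app_nil_r. reflexivity.
Qed.

Lemma pinch_collapse e g : in_sub e g ->
  pres_eq hnn_rels ((None, e) :: base g ++ [(None, negb e)]) (base (transfer e g)).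
Proof.
  intros [s Hs]. rewrite (base_hom _ _ (transfer_spec e g s Hs)), (base_hom _ _ Hs), !base_subst.
  change ((None, e) :: subst (fun i => base (gens e i)) s ++ [(None, negb e)])
    with ([(None, e)] ++ subst (fun i => base (gens e i)) s ++ word_inv [(None, e)]).
  rewrite conj_subst. apply subst_ext_pres_eq. intro i. apply hnn_relation.
Qed.

Lemma not_reduced l : ~ reduced l -> exists l1 a b l2, l = l1 ++ a :: b :: l2 /\ pinch a b.
Proof.
  induction l as [|a [|b l'] IH]; simpl; try tauto.
  intro Hl. destruct (classic (pinch a b)) as [P|P].
  - exists [], a, b, l'. auto.
  - destruct IH as [l1 [a' [b' [l2 [E P']]]]]; [tauto|].
    exists (a :: l1), a', b', l2. rewrite E. auto.
Qed.

Lemma reduced_change_last lz e g g' : reduced (lz ++ [(e, g)]) -> reduced (lz ++ [(e, g')]).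
Proof.
  induction lz as [|a lz IH]; simpl; auto.
  destruct lz as [|b lz]; simpl in *; auto.
  intros [H1 H2]. split; auto. apply IH; exact H2.
Qed.

Lemma reduced_join L0 a b M :
  reduced (L0 ++ [a]) -> reduced (b :: M) -> ~ pinch a b -> reduced (L0 ++ a :: b :: M).
Proof.
  induction L0 as [|x L0 IH]; simpl; auto.
  destruct L0 as [|y L0]; simpl in *.
  - intros [H1 _] H2 H3. auto.
  - intros [H1 H2] H3 H4. split; auto. apply IH; auto.
Qed.

Fixpoint list_pow (L : list (bool * word G)) (n : nat) : list (bool * word G) :=
  match n with 0 => [] | S n' => L ++ list_pow L n' end.

Lemma t_word_pow L n : word_pow (t_word L) n = t_word (list_pow L n).
Proof. induction n; simpl; auto. rewrite t_word_app, IHn. reflexivity. Qed.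

Lemma list_pow_reduced L0 a b L1 : L0 ++ [a] = b :: L1 -> reduced (b :: L1) -> ~ pinch a b ->
  forall n, exists M, list_pow (b :: L1) (S n) = b :: M /\ reduced (b :: M).
Proof.
  intros EL Hred Hp n. induction n as [|n [M [E1 E2]]].
  - exists (L1 ++ []). simpl. rewrite app_nil_r. auto.
  - exists (L1 ++ b :: M). split.
    + change (list_pow (b :: L1) (S (S n))) with ((b :: L1) ++ list_pow (b :: L1) (S n)).
      rewrite E1. reflexivity.
    + change (b :: L1 ++ b :: M) with ((b :: L1) ++ b :: M). rewrite <- EL, <- app_assoc.
      apply reduced_join; auto. rewrite EL. auto.
Qed.

Lemma cyclically_reduced_no_torsion L0 a b L1 :
  L0 ++ [a] = b :: L1 -> reduced (b :: L1) -> ~ pinch a b ->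
  forall n, 1 <= n -> ~ pres_eq hnn_rels (word_pow (t_word (b :: L1)) n) [].
Proof.
  intros EL Hred Hp [|n] Hn; [lia|].
  destruct (list_pow_reduced L0 a b L1 EL Hred Hp n) as [M [E1 E2]].
  rewrite t_word_pow, E1. apply britton; [discriminate | exact E2].
Qed.

Local Notation tf_elem := (torsion_free_elem hnn_rels).

Lemma tf_elem_base g0 : presented_torsion_free R -> tf_elem (base g0).
Proof.
  intros Htf n Hn Hpow. unfold base in Hpow. rewrite <- rename_pow in Hpow.
  apply (base_hom g0 []), (Htf _ n Hn), base_injective, Hpow.
Qed.

(* Collapsing a pinch lowers the number of t-letters by two. *)
Lemma tf_elem_unreduced g0 l : ~ reduced l ->
  (forall w, t_count w < length l -> tf_elem w) -> tf_elem (base g0 ++ t_word l).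
Proof.
  intros Hl IH. destruct (not_reduced l Hl) as [l1 [[e g] [[e' g'] [l2 [-> [Pe Ps]]]]]].
  simpl in Pe, Ps. subst e'.
  apply (torsion_free_elem_eq hnn_rels _ (base g0 ++ t_word l1 ++ base (transfer e g) ++ base g' ++ t_word l2)).
  - rewrite t_word_app, <- (pinch_collapse e g Ps). simpl. rewrite <- !app_assoc. reflexivity.
  - apply IH. rewrite !t_count_app, !t_count_base, !t_count_t_word, length_app. simpl. lia.
Qed.

(* A pinch between the last and the first t-letter collapses after conjugating by t. *)
Lemma tf_elem_wraparound e g g' mid : in_sub e g ->
  tf_elem (base g' ++ t_word mid ++ base (transfer e g)) ->
  tf_elem (t_word ((negb e, g') :: mid ++ [(e, g)])).
Proof.
  intros Hg. apply (torsion_free_elem_conj hnn_rels [(None, negb e)]).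
  change (word_inv [(@None G, negb e)]) with [(@None G, negb (negb e))].
  rewrite Bool.negb_involutive, <- (pinch_collapse e g Hg).
  change (t_word ((negb e, g') :: mid ++ [(e, g)]))
    with ((None, negb e) :: base g' ++ t_word (mid ++ [(e, g)])).
  rewrite t_word_app. symmetry.
  transitivity ([(None, e); (None, negb e)] ++ base g' ++ t_word mid ++ (None, e) :: base g ++ [(None, negb e)]).
  - simpl. rewrite !app_nil_r, <- !app_assoc. reflexivity.
  - apply (pe_free hnn_rels [] _ None e).
Qed.

(* A reduced t-word, seen cyclically: either it wraps around into a pinch, or it
   is cyclically reduced and has no trivial power. *)
Lemma tf_elem_cyclic L0 a : reduced (L0 ++ [a]) ->
  (forall w, t_count w < length L0 -> tf_elem w) -> tf_elem (t_word (L0 ++ [a])).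
Proof.
  intros Hred IH. destruct L0 as [|b mid].
  - intros n Hn Hpow. exfalso.
    refine (cyclically_reduced_no_torsion [] a a [] eq_refl Hred _ n Hn Hpow).
    intros [P _]. destruct a as [[] g]; discriminate.
  - destruct (classic (pinch a b)) as [[Pe Ps]|Pc].
    + destruct a as [e g], b as [e1 g1]. simpl in Pe, Ps. subst e1.
      apply tf_elem_wraparound; auto. apply IH.
      rewrite !t_count_app, !t_count_base, !t_count_t_word. simpl. lia.
    + intros n Hn Hpow. exfalso.
      exact (cyclically_reduced_no_torsion (b :: mid) a b (mid ++ [a]) eq_refl Hred Pc n Hn Hpow).
Qed.

(* Conjugating by the G-prefix brings a reduced word into the cyclic situation. *)
Lemma tf_elem_reduced g0 b L1 : reduced (b :: L1) ->
  (forall w, t_count w < length (b :: L1) -> tf_elem w) -> tf_elem (base g0 ++ t_word (b :: L1)).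
Proof.
  intros Hred IH. destruct (@exists_last _ (b :: L1) ltac:(discriminate)) as [lz [[e g] El]].
  apply (torsion_free_elem_conj hnn_rels (base g0) _ (t_word (lz ++ [(e, g ++ g0)]))).
  - rewrite El, !t_word_app. simpl. rewrite !app_nil_r, base_app, <- !app_assoc.
    rewrite (app_assoc (word_inv (base g0))), app_word_inv_l. reflexivity.
  - apply tf_elem_cyclic.
    + apply (reduced_change_last lz e g). rewrite <- El. exact Hred.
    + intros w Hw. apply IH. rewrite El, length_app. simpl. lia.
Qed.

Theorem hnn_torsion_free : presented_torsion_free R -> presented_torsion_free hnn_rels.
Proof.
  intros Htf w. remember (t_count w) as m eqn:Hm. revert w Hm.
  induction m as [m IH] using lt_wf_ind. intros w Hm.
  assert (IHw : forall w', t_count w' < m -> tf_elem w')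
    by (intros w' Hw'; exact (IH _ Hw' w' eq_refl)).
  destruct (decompose w) as [g0 [l ->]].
  rewrite t_count_app, t_count_base, t_count_t_word in Hm. simpl in Hm. subst m.
  destruct (classic (reduced l)) as [Hred|Hred].
  - destruct l as [|b L1].
    + rewrite app_nil_r. apply tf_elem_base, Htf.
    + apply tf_elem_reduced; auto.
  - apply tf_elem_unreduced; auto.
Qed.

End HNN.

Theorem hnn_torsion_free_iff G (R : word G -> Prop) I (h k : I -> word G) :
  (forall s : word I, pres_eq R (subst h s) [] <-> pres_eq R (subst k s) []) ->
  (presented_torsion_free (hnn_rels G R I h k) <-> presented_torsion_free R).
Proof. intro Hiso. split; [apply hnn_torsion_free_base | apply hnn_torsion_free]; auto. Qed.

(* Adjoining a free generator: the HNN extension with no associated generators. *)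
Definition no_gens {A : Type} (e : Empty_set) : word A := match e with end.

Definition free_ext {A : Type} (R : word A -> Prop) : word (option A) -> Prop :=
  hnn_rels A R Empty_set no_gens no_gens.

Lemma free_ext_torsion_free_iff {A : Type} (R : word A -> Prop) :
  presented_torsion_free (free_ext R) <-> presented_torsion_free R.
Proof. apply hnn_torsion_free_iff. reflexivity. Qed.

(* Generators of P2 = P * <a> * <b>: Some (Some j) is x_(j+1), a = Some None, b = None. *)
Notation P2gen := (option (option nat)).
Definition gen_a : P2gen := Some None.
Definition gen_b : P2gen := None.

Definition x_word (i : nat) : word P2gen :=
  match i with O => [] | S j => [(Some (Some j), false)] end.

Definition gen_pow {A : Type} (y : A) (n : nat) : word A := word_pow [(y, false)] n.

Definition assoc_h (i : nat) : word P2gen :=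
  x_word i ++ word_inv (gen_pow gen_b i) ++ [(gen_a, false)] ++ gen_pow gen_b i.
Definition assoc_k (i : nat) : word P2gen :=
  word_inv (gen_pow gen_a i) ++ [(gen_b, false)] ++ gen_pow gen_a i.

Lemma subst_gen_pow {A B : Type} (f : A -> word B) y n : subst f (gen_pow y n) = word_pow (f y ++ []) n.
Proof. unfold gen_pow. rewrite subst_pow. reflexivity. Qed.

Lemma word_inv_gen_pow_S {A : Type} (y : A) n :
  word_inv (gen_pow y (S n)) = word_inv (gen_pow y n) ++ [(y, true)].
Proof. change (gen_pow y (S n)) with ([(y, false)] ++ gen_pow y n).
  rewrite word_inv_app. reflexivity.
Qed.

Section Relators.
Variable R : word nat -> Prop.

Definition P2_rels : word P2gen -> Prop := free_ext (free_ext R).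

Lemma P2_relator r : P2_rels r -> exists r0, R r0 /\ r = base _ (base _ r0).
Proof.
  intros [[r' [Hr' ->]] | [[] _]]. destruct Hr' as [[r0 [Hr0 ->]] | [[] _]]. eauto.
Qed.

Definition swap_ab (y : P2gen) : word P2gen :=
  match y with None => [(gen_a, false)] | Some None => [(gen_b, false)] | Some (Some _) => [] end.

Lemma swap_ab_base r0 : subst swap_ab (base _ (base _ r0)) = [].
Proof. induction r0 as [|[a b] r0 IH]; [reflexivity|]. destruct b; exact IH. Qed.

Lemma swap_ab_assoc i : subst swap_ab (assoc_h i) = assoc_k i.
Proof.
  unfold assoc_h, assoc_k. rewrite !subst_app, subst_inv, !subst_gen_pow.
  destruct i; reflexivity.
Qed.

(* Rewriting through the kernel of a |-> 1, b |-> 0, x_j |-> 0 (Reidemeister–Schreier):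
   kernel_rewrite c w lists the letters b^{+-1} of w, each tagged with the current
   a-exponent (starting from c), i.e. as the conjugates a^c b a^-c; the second
   component is the final a-exponent. *)
Fixpoint kernel_rewrite (c : Z) (w : word P2gen) : word Z * Z :=
  match w with
  | [] => ([], c)
  | (y, b) :: w' =>
      match y with
      | Some None => kernel_rewrite (if b then (c - 1)%Z else (c + 1)%Z) w'
      | None => ((c, b) :: fst (kernel_rewrite c w'), snd (kernel_rewrite c w'))
      | Some (Some _) => kernel_rewrite c w'
      end
  end.

Lemma kernel_rewrite_app c u v :
  kernel_rewrite c (u ++ v) =
  (fst (kernel_rewrite c u) ++ fst (kernel_rewrite (snd (kernel_rewrite c u)) v),
   snd (kernel_rewrite (snd (kernel_rewrite c u)) v)).
Proof.
  revert c. induction u as [|[[[j|]|] b] u IH]; intro c; simpl; auto.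
  - destruct (kernel_rewrite c v); reflexivity.
  - rewrite IH. reflexivity.
Qed.

Lemma kernel_rewrite_base c r0 : kernel_rewrite c (base _ (base _ r0)) = ([], c).
Proof. induction r0 as [|[a b] r0 IH]; [reflexivity | exact IH]. Qed.

Definition no_rels {A : Type} (w : word A) : Prop := False.

Lemma kernel_rewrite_hom u v : pres_eq P2_rels u v -> forall c,
  pres_eq no_rels (fst (kernel_rewrite c u)) (fst (kernel_rewrite c v)) /\
  snd (kernel_rewrite c u) = snd (kernel_rewrite c v).
Proof.
  induction 1; intro c.
  - split; reflexivity.
  - destruct (IHpres_eq c); split; symmetry; auto.
  - destruct (IHpres_eq1 c), (IHpres_eq2 c); split; etransitivity; eauto.
  - rewrite !kernel_rewrite_app. set (c1 := snd (kernel_rewrite c u)).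
    destruct g as [[j|]|]; simpl.
    + split; reflexivity.
    + replace ((if negb b then ((if b then c1 - 1 else c1 + 1) - 1)
                else ((if b then c1 - 1 else c1 + 1) + 1))%Z) with c1 by (destruct b; simpl; lia).
      split; reflexivity.
    + split; [|reflexivity]. apply app_proper; [reflexivity | apply (pe_free no_rels [] _ c1 b)].
  - destruct (P2_relator r H) as [r0 [_ ->]]. rewrite !kernel_rewrite_app, kernel_rewrite_base.
    split; reflexivity.
Qed.

Lemma kernel_rewrite_pow_a c n : kernel_rewrite c (gen_pow gen_a n) = ([], (c + Z.of_nat n)%Z).
Proof.
  revert c. induction n; intro c; simpl; [f_equal; lia|].
  unfold gen_pow in IHn. rewrite IHn. f_equal. lia.
Qed.

Lemma kernel_rewrite_pow_a_inv c n :
  kernel_rewrite c (word_inv (gen_pow gen_a n)) = ([], (c - Z.of_nat n)%Z).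
Proof.
  revert c. induction n; intro c; [simpl; f_equal; lia|].
  rewrite word_inv_gen_pow_S, kernel_rewrite_app, IHn. simpl. f_equal. lia.
Qed.

Lemma kernel_rewrite_assoc_k c i : kernel_rewrite c (assoc_k i) = ([((c - Z.of_nat i)%Z, false)], c).
Proof.
  unfold assoc_k. rewrite kernel_rewrite_app, kernel_rewrite_pow_a_inv. simpl.
  rewrite kernel_rewrite_pow_a. simpl. f_equal. lia.
Qed.

Lemma kernel_rewrite_assoc_k_inv c i :
  kernel_rewrite c (word_inv (assoc_k i)) = ([((c - Z.of_nat i)%Z, true)], c).
Proof.
  unfold assoc_k. rewrite !word_inv_app, word_inv_involutive, <- app_assoc, kernel_rewrite_app,
    kernel_rewrite_pow_a_inv. simpl. rewrite kernel_rewrite_pow_a. simpl. f_equal. lia.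
Qed.

(* The k_i are a free basis: the rewrite of a word in them is its renaming i |-> -i. *)
Lemma kernel_rewrite_subst_k s :
  kernel_rewrite 0 (subst assoc_k s) = (rename (fun i => (- Z.of_nat i)%Z) s, 0%Z).
Proof.
  induction s as [|[i b] s IH]; [reflexivity|].
  rewrite subst_cons, kernel_rewrite_app. simpl fst; simpl snd. destruct b.
  - rewrite kernel_rewrite_assoc_k_inv. simpl. rewrite IH. reflexivity.
  - rewrite kernel_rewrite_assoc_k. simpl. rewrite IH. reflexivity.
Qed.

Lemma assoc_iso_hk (s : word nat) :
  pres_eq P2_rels (subst assoc_h s) [] <-> pres_eq P2_rels (subst assoc_k s) [].
Proof.
  split; intro E.
  - apply (subst_hom P2_rels P2_rels swap_ab) in E.
    + rewrite subst_subst, (subst_ext _ assoc_k) in E by apply swap_ab_assoc. exact E.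
    + intros r Hr. destruct (P2_relator r Hr) as [r0 [_ ->]]. rewrite swap_ab_base. reflexivity.
  - destruct (kernel_rewrite_hom _ _ E 0%Z) as [Ek _]. rewrite kernel_rewrite_subst_k in Ek. simpl in Ek.
    (* s is trivial in the free group, hence so is its image under i |-> h_i *)
    apply (subst_hom no_rels no_rels (fun z => [(Z.to_nat (- z), false)])) in Ek; [|intros r []].
    rewrite <- rename_subst, rename_rename, rename_id in Ek by (intro; lia).
    exact (subst_hom no_rels P2_rels assoc_h (fun r (Hr : no_rels r) => False_ind _ Hr) _ _ Ek).
Qed.

(* Q is (up to renaming generators) the HNN extension of P2 along h_i |-> k_i. *)
Definition P3_rels : word (option P2gen) -> Prop := hnn_rels P2gen P2_rels nat assoc_h assoc_k.

Lemma P3_torsion_free_iff : presented_torsion_free P3_rels <-> presented_torsion_free R.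
Proof.
  unfold P3_rels. rewrite (hnn_torsion_free_iff _ _ _ _ _ assoc_iso_hk).
  unfold P2_rels. rewrite !free_ext_torsion_free_iff. reflexivity.
Qed.

End Relators.

Definition Q_to_P3 (x : QGen) : option P2gen :=
  match x with QX j => Some (Some (Some j)) | QA => Some gen_a | QB => Some gen_b | QT => None end.

Definition P3_to_Q (y : option P2gen) : QGen :=
  match y with Some (Some (Some j)) => QX j | Some (Some None) => QA | Some None => QB | None => QT end.

Lemma P3_to_Q_to_P3 x : P3_to_Q (Q_to_P3 x) = x.
Proof. destruct x; reflexivity. Qed.

Lemma Q_to_P3_to_Q y : Q_to_P3 (P3_to_Q y) = y.
Proof. destruct y as [[[j|]|]|]; reflexivity. Qed.

Lemma rename_embedX r0 : rename Q_to_P3 (embedX r0) = base _ (base _ (base _ r0)).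
Proof. induction r0 as [|[a b] r0 IH]; [reflexivity|]. simpl. f_equal. exact IH. Qed.

Lemma rename_Q_rel_i i : rename Q_to_P3 (Q_rel_i i) =
  [(None, true)] ++ base _ (assoc_h i) ++ [(None, false)] ++ word_inv (base _ (assoc_k i)).
Proof.
  unfold Q_rel_i, assoc_h, assoc_k, base, gpow, gen_pow.
  rewrite !rename_app, !rename_inv, !rename_pow, !rename_app, !rename_inv, !rename_pow.
  simpl. rewrite <- !app_assoc. f_equal. destruct i; reflexivity.
Qed.

Lemma Q_rels_to_P3 (R : word nat -> Prop) q : Q_rels R q -> P3_rels R (rename Q_to_P3 q).
Proof.
  intros [[r0 [Hr0 ->]] | [i ->]].
  - left. exists (base _ (base _ r0)). rewrite rename_embedX. split; [|reflexivity].
    left. exists (base _ r0). split; [|reflexivity]. left. exists r0. auto.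
  - right. exists i. apply rename_Q_rel_i.
Qed.

Lemma P3_to_Q_rels (R : word nat -> Prop) r : P3_rels R r -> Q_rels R (rename P3_to_Q r).
Proof.
  intros [[r' [Hr' ->]] | [i ->]].
  - destruct (P2_relator R r' Hr') as [r0 [Hr0 ->]]. left. exists r0. split; auto.
    rewrite <- rename_embedX, rename_rename, rename_id by exact P3_to_Q_to_P3. reflexivity.
  - right. exists i. rewrite <- rename_Q_rel_i, rename_rename, rename_id by exact P3_to_Q_to_P3.
    reflexivity.
Qed.

Theorem lemma5p8 (R : word nat -> Prop) :
  presented_torsion_free (Q_rels R) <-> presented_torsion_free R.
Proof.
  rewrite (torsion_free_rename_iff (Q_rels R) (P3_rels R) Q_to_P3 P3_to_Q P3_to_Q_to_P3 Q_to_P3_to_Q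
             (Q_rels_to_P3 R) (P3_to_Q_rels R)).
  apply P3_torsion_free_iff.
Qed.
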